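(* Let $Y$ be a topological space such that $\mathrm{H}_1([0,1],Y)\subseteq \mathrm{B}_1([0,1],Y)$. Then $Y$ is almost arcwise connected.
   Context: $\mathrm{H}_1(X,Y)$: mappings $f:X\to Y$ with $f^{-1}(V)$ an $F_\sigma$-set for every open $V\subseteq Y$. $\mathrm{B}_1(X,Y)$: pointwise limits of sequences of continuous mappings $X\to Y$. A space $Y$ is almost arcwise connected if for each pair of nonempty open sets $U,V\subseteq Y$ there is a continuous $\gamma:[0,1]\to Y$ with $\gamma(0)\in U$ and $\gamma(1)\in V$ (an arc in $Y$ joining $U$ and $V$). *)

From Stdlib Require Import Reals.
Open Scope R_scope.

Record TopSpace := {
  carrier :> Type;
  is_open : (carrier -> Prop) -> Prop;
  open_full : is_open (fun _ => True);
  open_inter : forall U V, is_open U -> is_open V -> is_open (fun y => U y /\ V y);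
  open_union : forall F : (carrier -> Prop) -> Prop,
      (forall U, F U -> is_open U) -> is_open (fun y => exists U, F U /\ U y);
  open_ext : forall U V, is_open U -> (forall y, U y <-> V y) -> is_open V
}.

Definition I01 : Type := { x : R | 0 <= x <= 1 }.

Definition I01_open (U : I01 -> Prop) : Prop :=
  forall x : I01, U x -> exists eps : R, eps > 0 /\
    forall y : I01, Rabs (proj1_sig y - proj1_sig x) < eps -> U y.

Definition I01_closed (A : I01 -> Prop) : Prop :=
  I01_open (fun x => ~ A x).

Definition F_sigma (A : I01 -> Prop) : Prop :=
  exists F : nat -> I01 -> Prop,
    (forall n, I01_closed (F n)) /\
    (forall x, A x <-> exists n, F n x).

Definition I01_zero : I01 := exist _ 0 (conj (Rle_refl 0) Rle_0_1).
Definition I01_one : I01 := exist _ 1 (conj Rle_0_1 (Rle_refl 1)).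

Definition continuous_I (Y : TopSpace) (f : I01 -> Y) : Prop :=
  forall V : Y -> Prop, is_open Y V -> I01_open (fun x => V (f x)).

Definition H1_class (Y : TopSpace) (f : I01 -> Y) : Prop :=
  forall V : Y -> Prop, is_open Y V -> F_sigma (fun x => V (f x)).

Definition seq_converges (Y : TopSpace) (u : nat -> Y) (l : Y) : Prop :=
  forall V : Y -> Prop, is_open Y V -> V l ->
    exists N : nat, forall n, (N <= n)%nat -> V (u n).

Definition B1_class (Y : TopSpace) (f : I01 -> Y) : Prop :=
  exists fn : nat -> I01 -> Y,
    (forall n, continuous_I Y (fn n)) /\
    (forall x, seq_converges Y (fun n => fn n x) (f x)).

Definition almost_arcwise_connected (Y : TopSpace) : Prop :=
  forall U V : Y -> Prop,
    is_open Y U -> (exists u, U u) ->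
    is_open Y V -> (exists v, V v) ->
    exists gamma : I01 -> Y,
      continuous_I Y gamma /\ U (gamma I01_zero) /\ V (gamma I01_one).

(* The map f with f = u on [0,1) and f(1) = v takes two values, so every
   preimage under f is one of the F_sigma sets empty, [0,1), {1}, [0,1];
   hence f is in H_1 and therefore in B_1.  A continuous approximant f_n
   with n large enough already satisfies f_n(0) in U and f_n(1) in V, so it
   is an arc joining U and V. *)
From Stdlib Require Import Reals Lra Lia Classical.
Open Scope R_scope.

Lemma I01_closed_le (a : R) : I01_closed (fun x => proj1_sig x <= a).
Proof.
  intros x Hx; exists (proj1_sig x - a); split; [lra|].
  intros y Hy Hya; apply Rabs_def2 in Hy; lra.
Qed.

Lemma I01_closed_ge (a : R) : I01_closed (fun x => a <= proj1_sig x).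
Proof.
  intros x Hx; exists (a - proj1_sig x); split; [lra|].
  intros y Hy Hya; apply Rabs_def2 in Hy; lra.
Qed.

Lemma F_sigma_closed {A : I01 -> Prop} : I01_closed A -> F_sigma A.
Proof.
  intros HA; exists (fun _ => A); split; [easy|].
  intros x; split; [now exists 0%nat | now intros [_ Ax]].
Qed.

Lemma F_sigma_lt (a : R) : F_sigma (fun x => proj1_sig x < a).
Proof.
  exists (fun n x => proj1_sig x <= a - / INR (S n)); split.
  { intros n; apply I01_closed_le. }
  intros x; split.
  - intros Hxa.
    destruct (archimed_cor1 (a - proj1_sig x)) as [N [HN HN0]]; [lra|].
    exists N.
    assert (0 < INR N) by (apply lt_0_INR; lia).
    assert (/ INR (S N) < / INR N)
      by (apply Rinv_lt_contravar; rewrite S_INR; nra).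
    lra.
  - intros [n Hn].
    assert (0 < / INR (S n)) by (apply Rinv_0_lt_compat, lt_0_INR; lia).
    lra.
Qed.

Lemma F_sigma_or {A B : I01 -> Prop} :
  F_sigma A -> F_sigma B -> F_sigma (fun x => A x \/ B x).
Proof.
  intros [F [HF HFA]] [G [HG HGB]].
  exists (fun n x => F n x \/ G n x); split.
  - intros n x Hx.
    destruct (HF n x (fun h => Hx (or_introl h))) as [e1 [He1 H1]].
    destruct (HG n x (fun h => Hx (or_intror h))) as [e2 [He2 H2]].
    exists (Rmin e1 e2); split; [now apply Rmin_glb_lt|].
    pose proof (Rmin_l e1 e2); pose proof (Rmin_r e1 e2).
    intros y Hy [Fy|Gy]; [apply (H1 y) | apply (H2 y)]; auto; lra.
  - intros x; rewrite HFA, HGB; split.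
    + intros [[n Fx]|[n Gx]]; exists n; auto.
    + intros [n [Fx|Gx]]; [left|right]; exists n; auto.
Qed.

Lemma F_sigma_andP (P : Prop) {A : I01 -> Prop} :
  F_sigma A -> F_sigma (fun x => P /\ A x).
Proof.
  intros HA; destruct (classic P) as [p|np].
  - destruct HA as [F [HF HFA]]; exists F; split; [easy|].
    intros x; rewrite <- HFA; tauto.
  - exists (fun _ _ => False); split.
    + intros _ x _; exists 1; split; [lra | tauto].
    + intros x; split; [tauto | now intros [_ []]].
Qed.

Definition I01_step {Y : Type} (u v : Y) (x : I01) : Y :=
  if Rlt_dec (proj1_sig x) 1 then u else v.

Lemma F_sigma_preimage_step {Y : Type} (u v : Y) (P : Y -> Prop) :
  F_sigma (fun x => P (I01_step u v x)).
Proof.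
  assert (Hstep : forall x, P (I01_step u v x) <->
            (P u /\ proj1_sig x < 1) \/ (P v /\ 1 <= proj1_sig x)).
  { intros x; unfold I01_step.
    destruct (Rlt_dec (proj1_sig x) 1); split; intuition lra. }
  destruct (F_sigma_or (F_sigma_andP (P u) (F_sigma_lt 1))
              (F_sigma_andP (P v) (F_sigma_closed (I01_closed_ge 1))))
    as [F [HF HFA]].
  exists F; split; [easy|]; intros x; rewrite Hstep; apply HFA.
Qed.

Lemma H1_step {Y : TopSpace} (u v : Y) : H1_class Y (I01_step u v).
Proof. intros W _; apply F_sigma_preimage_step. Qed.

Lemma B1_continuous_approx {Y : TopSpace} {f : I01 -> Y} {a b : I01}
    {U V : Y -> Prop} :
  B1_class Y f -> is_open Y U -> U (f a) -> is_open Y V -> V (f b) ->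
  exists g : I01 -> Y, continuous_I Y g /\ U (g a) /\ V (g b).
Proof.
  intros [fn [Hcont Hconv]] HU Ufa HV Vfb.
  destruct (Hconv a U HU Ufa) as [Na HNa].
  destruct (Hconv b V HV Vfb) as [Nb HNb].
  exists (fn (max Na Nb)); split; [apply Hcont|].
  split; [apply HNa | apply HNb]; lia.
Qed.

Theorem mainTheorem9 (Y : TopSpace) :
  (forall f : I01 -> carrier Y, H1_class Y f -> B1_class Y f) -> almost_arcwise_connected Y.
Proof.
  intros HB U V HU [u Uu] HV [v Vv].
  apply (B1_continuous_approx (HB _ (H1_step u v)) HU); [|exact HV|].
  - unfold I01_step; simpl; destruct (Rlt_dec 0 1); [exact Uu | lra].
  - unfold I01_step; simpl; destruct (Rlt_dec 1 1); [lra | exact Vv].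
Qed.
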